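(* Let $T$ be a rooted binary phylogenetic tree with root of out-degree 2 and at least 3 leaves, under the $N_2$ model, let $y,z$ be a cherry with parent $w$, and let $T''$ and $T'_{0.5}$ be as defined in the context. Then $RA_\varphi(T'')\ge RA_\varphi(T'_{0.5})$.
   Context: A rooted binary phylogenetic tree is a finite tree with a distinguished root vertex $\rho$, all edges directed away from $\rho$, in which $\rho$ has out-degree 2 or 1, and every other vertex has in-degree 1 and out-degree 0 or 2; out-degree-0 vertices are leaves. Under the Neyman 2-state model $N_2$, each edge $e$ carries a substitution probability $p_e\in[0,\frac12]$; given the root state, states propagate independently along edges, each edge changing state with probability $p_e$. The coin-toss method $\varphi$: leaves get their observed states; proceeding towards the root, a vertex whose two children have equal states gets that state, otherwise one of the two chosen by an independent fair coin toss; a vertex with a single child gets its child's state; $RA_\varphi$ is the probability that the state assigned to the root equals the true root state. Vertices of in- and out-degree 1 may be suppressed (merging consecutive edges with substitution probabilities $a,b$ into one with probability $a+b-2ab$). $T'_{0.5}$ is obtained from $T$ by deleting $y,z$ and their incident edges, attaching a new leaf $w^\star$ to $w$ via an edge with substitution probability $\frac12$, and suppressing $w$. $T''$ is obtained from $T$ by deleting $y$, $z$, $w$ and all edges incident to them (including the edge into $w$), and suppressing the resulting vertex of in- and out-degree 1. *)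

From Stdlib Require Import Reals Lra.
Open Scope R_scope.

(* Rooted trees with substitution probabilities on edges.
   Node1 p t : vertex with one child t, edge probability p.
   Node2 p1 t1 p2 t2 : vertex with two children. *)
Inductive tree : Type :=
| Leaf : tree
| Node1 : R -> tree -> tree
| Node2 : R -> tree -> R -> tree -> tree.

Fixpoint all_binary (t : tree) : Prop :=
  match t with
  | Leaf => True
  | Node1 _ _ => False
  | Node2 _ t1 _ t2 => all_binary t1 /\ all_binary t2
  end.

Fixpoint nleaves (t : tree) : nat :=
  match t with
  | Leaf => 1%nat
  | Node1 _ t1 => nleaves t1
  | Node2 _ t1 _ t2 => (nleaves t1 + nleaves t2)%nat
  end.

Fixpoint probs_ok (t : tree) : Prop :=
  match t with
  | Leaf => True
  | Node1 p t1 => 0 <= p <= /2 /\ probs_ok t1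
  | Node2 p1 t1 p2 t2 =>
      0 <= p1 <= /2 /\ probs_ok t1 /\ 0 <= p2 <= /2 /\ probs_ok t2
  end.

(* One-hole contexts whose hole is a vertex; the outermost constructor
   is at the root. *)
Inductive ctx : Type :=
| Hole : ctx
| CL : R -> ctx -> R -> tree -> ctx
| CR : R -> tree -> R -> ctx -> ctx.

Fixpoint fill (C : ctx) (u : tree) : tree :=
  match C with
  | Hole => u
  | CL p1 C1 p2 t2 => Node2 p1 (fill C1 u) p2 t2
  | CR p1 t1 p2 C2 => Node2 p1 t1 p2 (fill C2 u)
  end.

(* merging two consecutive edges *)
Definition merge (a b : R) : R := a + b - 2 * a * b.

(* suppress every non-root vertex of in- and out-degree 1:
   supp_edge p t gives the (merged) edge probability and subtree hanging
   below an edge with probability p into t. *)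
Fixpoint supp_edge (p : R) (t : tree) : R * tree :=
  match t with
  | Leaf => (p, Leaf)
  | Node1 q t1 => let (q', t') := supp_edge q t1 in (merge p q', t')
  | Node2 p1 t1 p2 t2 =>
      let (a1, u1) := supp_edge p1 t1 in
      let (a2, u2) := supp_edge p2 t2 in
      (p, Node2 a1 u1 a2 u2)
  end.

Definition suppress (t : tree) : tree :=
  match t with
  | Leaf => Leaf
  | Node1 q t1 => let (q', t') := supp_edge q t1 in Node1 q' t'
  | Node2 p1 t1 p2 t2 =>
      let (a1, u1) := supp_edge p1 t1 in
      let (a2, u2) := supp_edge p2 t2 in
      Node2 a1 u1 a2 u2
  end.

(* N2 model: states are booleans *)
Definition trans (p : R) (s s' : bool) : R := if Bool.eqb s s' then 1 - p else p.

Definition ind (b : bool) : R := if b then 1 else 0.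

(* coin-toss rule: probability that the parent is assigned x when the
   children are assigned x1, x2 *)
Definition coin (x1 x2 x : bool) : R :=
  if Bool.eqb x1 x2 then ind (Bool.eqb x x1) else /2.

(* P t s x : probability that the coin-toss method assigns state x to the
   root of t, given that the true state at the root of t is s. *)
Fixpoint Pphi (t : tree) (s x : bool) : R :=
  match t with
  | Leaf => ind (Bool.eqb x s)
  | Node1 p t1 =>
      trans p s false * Pphi t1 false x + trans p s true * Pphi t1 true x
  | Node2 p1 t1 p2 t2 =>
      let Q1 x1 := trans p1 s false * Pphi t1 false x1
                   + trans p1 s true * Pphi t1 true x1 in
      let Q2 x2 := trans p2 s false * Pphi t2 false x2
                   + trans p2 s true * Pphi t2 true x2 in
      Q1 false * Q2 false * coin false false x
      + Q1 false * Q2 true * coin false true x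
      + Q1 true * Q2 false * coin true false x
      + Q1 true * Q2 true * coin true true x
  end.

(* reconstruction accuracy, root state uniform (stationary law of N2) *)
Definition RA (t : tree) : R := /2 * Pphi t false false + /2 * Pphi t true true.

Definition cherry (py pz : R) : tree := Node2 py Leaf pz Leaf.

From Stdlib Require Import Reals Lra.
Open Scope R_scope.

(* Under N2 the coin-toss method commutes with swapping the two states, so
   RA(t) is a single number [acc t] with P(assign x | root s) = acc t if x = s
   and 1 - acc t otherwise.  An edge of probability p maps an accuracy a to
   a (1 - 2p) + p, which is nondecreasing in a and fixes 1/2, and a binary
   vertex averages the accuracies seen through its two edges; suppressing
   degree-2 vertices changes nothing.  Hence every subtree has accuracy at
   least 1/2, accuracy is monotone under plugging into a context, and at the
   vertex u the tree T'' sees the accuracy b of the edge into S while T'_{0.5}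
   sees the average of 1/2 and b, which is at most b. *)

Definition Pedge (p : R) (t : tree) (s x : bool) : R :=
  trans p s false * Pphi t false x + trans p s true * Pphi t true x.

Lemma Pphi_Node2_congr a1 u1 a2 u2 p1 t1 p2 t2 :
  (forall s x, Pedge a1 u1 s x = Pedge p1 t1 s x) ->
  (forall s x, Pedge a2 u2 s x = Pedge p2 t2 s x) ->
  forall s x, Pphi (Node2 a1 u1 a2 u2) s x = Pphi (Node2 p1 t1 p2 t2) s x.
Proof.
  intros H1 H2 s x; simpl; unfold Pedge in *; rewrite !H1, !H2; reflexivity.
Qed.

Lemma Pedge_supp_edge t p s x :
  Pedge (fst (supp_edge p t)) (snd (supp_edge p t)) s x = Pedge p t s x.
Proof.
  revert p s x.
  induction t as [|q t1 IH|p1 t1 IH1 p2 t2 IH2]; intros p s x; simpl.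
  - reflexivity.
  - specialize (IH q). destruct (supp_edge q t1) as [q' t']; simpl in *.
    assert (Hq : forall m, Pphi (Node1 q t1) m x = Pedge q' t' m x)
      by (intro m; rewrite IH; reflexivity).
    unfold Pedge at 2. rewrite !Hq. unfold Pedge, trans, merge.
    destruct s; simpl; ring.
  - specialize (IH1 p1). specialize (IH2 p2).
    destruct (supp_edge p1 t1) as [a1 u1], (supp_edge p2 t2) as [a2 u2].
    simpl in *. unfold Pedge.
    rewrite !(Pphi_Node2_congr a1 u1 a2 u2 p1 t1 p2 t2 IH1 IH2). reflexivity.
Qed.

Lemma Pphi_suppress t s x : Pphi (suppress t) s x = Pphi t s x.
Proof.
  destruct t as [|q t1|p1 t1 p2 t2]; simpl.
  - reflexivity.
  - pose proof (Pedge_supp_edge t1 q) as H.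
    destruct (supp_edge q t1) as [q' t']. exact (H s x).
  - pose proof (Pedge_supp_edge t1 p1) as H1.
    pose proof (Pedge_supp_edge t2 p2) as H2.
    destruct (supp_edge p1 t1) as [a1 u1], (supp_edge p2 t2) as [a2 u2].
    exact (Pphi_Node2_congr a1 u1 a2 u2 p1 t1 p2 t2 H1 H2 s x).
Qed.

Definition edge_acc (p a : R) : R := a * (1 - 2 * p) + p.

Lemma Pphi_state_symmetric t :
  exists a, forall s x, Pphi t s x = if Bool.eqb x s then a else 1 - a.
Proof.
  induction t as [|q t1 [a IH]|p1 t1 [a1 IH1] p2 t2 [a2 IH2]].
  - exists 1. intros [|] [|]; simpl; lra.
  - exists (edge_acc q a). intros s x; simpl; rewrite !IH.
    unfold trans, edge_acc; destruct s, x; simpl; ring.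
  - exists ((edge_acc p1 a1 + edge_acc p2 a2) / 2). intros s x; simpl.
    rewrite !IH1, !IH2. unfold coin, ind, trans, edge_acc.
    destruct s, x; simpl; field.
Qed.

Definition acc (t : tree) : R := Pphi t false false.

Lemma Pphi_acc t s x : Pphi t s x = if Bool.eqb x s then acc t else 1 - acc t.
Proof.
  destruct (Pphi_state_symmetric t) as [a Ha].
  unfold acc. rewrite !Ha. reflexivity.
Qed.

Lemma RA_acc t : RA t = acc t.
Proof. unfold RA. rewrite (Pphi_acc t true true). simpl. unfold acc. lra. Qed.

Lemma acc_suppress t : acc (suppress t) = acc t.
Proof. apply Pphi_suppress. Qed.

Lemma acc_Node1 p t : acc (Node1 p t) = edge_acc p (acc t).
Proof.
  unfold acc at 1; simpl. rewrite !(Pphi_acc t).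
  unfold trans, edge_acc; simpl. ring.
Qed.

Lemma acc_Node2 p1 t1 p2 t2 :
  acc (Node2 p1 t1 p2 t2) = (edge_acc p1 (acc t1) + edge_acc p2 (acc t2)) / 2.
Proof.
  unfold acc at 1; simpl. rewrite !(Pphi_acc t1), !(Pphi_acc t2).
  unfold coin, ind, trans, edge_acc; simpl. field.
Qed.

Lemma edge_acc_le p a b : 0 <= p <= /2 -> a <= b -> edge_acc p a <= edge_acc p b.
Proof.
  intros Hp Hab. unfold edge_acc.
  assert (0 <= (b - a) * (1 - 2 * p)) by (apply Rmult_le_pos; lra). lra.
Qed.

Lemma edge_acc_half p : edge_acc p (/2) = /2.
Proof. unfold edge_acc. field. Qed.

Lemma acc_ge_half t : probs_ok t -> /2 <= acc t.
Proof.
  induction t as [|q t1 IH|p1 t1 IH1 p2 t2 IH2]; simpl; intros Hok.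
  - unfold acc; simpl; lra.
  - destruct Hok as [Hq Ht1]. rewrite acc_Node1, <- (edge_acc_half q).
    exact (edge_acc_le q _ _ Hq (IH Ht1)).
  - destruct Hok as [Hp1 [Ht1 [Hp2 Ht2]]]. rewrite acc_Node2.
    pose proof (edge_acc_le p1 _ _ Hp1 (IH1 Ht1)).
    pose proof (edge_acc_le p2 _ _ Hp2 (IH2 Ht2)).
    rewrite edge_acc_half in *. lra.
Qed.

Fixpoint ctx_probs_ok (C : ctx) : Prop :=
  match C with
  | Hole => True
  | CL p1 C1 p2 t2 => 0 <= p1 <= /2 /\ ctx_probs_ok C1 /\ 0 <= p2 <= /2 /\ probs_ok t2
  | CR p1 t1 p2 C2 => 0 <= p1 <= /2 /\ probs_ok t1 /\ 0 <= p2 <= /2 /\ ctx_probs_ok C2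
  end.

Lemma probs_ok_fill C u : probs_ok (fill C u) -> ctx_probs_ok C /\ probs_ok u.
Proof.
  induction C as [|p1 C1 IH p2 t2|p1 t1 p2 C2 IH]; simpl.
  - tauto.
  - intros (Hp1 & HC1 & Hp2 & Ht2). destruct (IH HC1). tauto.
  - intros (Hp1 & Ht1 & Hp2 & HC2). destruct (IH HC2). tauto.
Qed.

Lemma acc_fill_le C u1 u2 :
  ctx_probs_ok C -> acc u1 <= acc u2 -> acc (fill C u1) <= acc (fill C u2).
Proof.
  induction C as [|p1 C1 IH p2 t2|p1 t1 p2 C2 IH]; simpl; intros HC Hu.
  - exact Hu.
  - destruct HC as (Hp1 & HC1 & _). rewrite !acc_Node2.
    pose proof (edge_acc_le p1 _ _ Hp1 (IH HC1 Hu)). lra.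
  - destruct HC as (_ & _ & Hp2 & HC2). rewrite !acc_Node2.
    pose proof (edge_acc_le p2 _ _ Hp2 (IH HC2 Hu)). lra.
Qed.

Theorem mainTheorem8 (T : tree) (C : ctx) (pw py pz ps : R) (S : tree) (wleft : bool) :
  all_binary T -> (3 <= nleaves T)%nat -> probs_ok T ->
  T = fill C (if wleft then Node2 pw (cherry py pz) ps S
              else Node2 ps S pw (cherry py pz)) ->
  let T'' := suppress (fill C (Node1 ps S)) in
  let T'05 := suppress (fill C (if wleft then Node2 pw (Node1 (/2) Leaf) ps S
                                else Node2 ps S pw (Node1 (/2) Leaf))) in
  RA T'' >= RA T'05.
Proof.
  intros _ _ Hok -> T'' T'05. subst T'' T'05.
  rewrite !RA_acc, !acc_suppress. apply Rle_ge.
  destruct (probs_ok_fill _ _ Hok) as [HC Hu].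
  apply acc_fill_le; [exact HC|].
  assert (Hs : 0 <= ps <= /2 /\ probs_ok S)
    by (destruct wleft; simpl in Hu; tauto).
  destruct Hs as [Hps HS].
  assert (Hhalf : edge_acc pw (edge_acc (/2) (acc Leaf)) = /2)
    by (unfold edge_acc; field).
  pose proof (edge_acc_le ps _ _ Hps (acc_ge_half S HS)) as Hb.
  rewrite edge_acc_half in Hb.
  destruct wleft; rewrite acc_Node2, !acc_Node1, Hhalf; lra.
Qed.
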